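(* Let $n\ge 3$ and $a\ge 1$ be integers. (i) Every power of a cycle $C_n^a$ is a TRVG. (ii) $D_n^1$ is a TRVG. (iii) If $a\ge 3$ and $n\ge 2a+8$, then $D_n^a$ is not a TRVG. (iv) If $a\ge 2$ and $n\le 2a+4$, then $D_n^a$ is a TRVG.
   Context: A graph $G$ is a transparent rectangle visibility graph (TRVG) if its vertices can be represented by a collection of pairwise non-overlapping rectangles in the plane whose sides are parallel to the coordinate axes, one per vertex, such that two distinct vertices are adjacent if and only if there is a horizontal or a vertical line intersecting the interiors of both of their rectangles (other rectangles do not block visibility). For integers $n\ge 3$, $a\ge 1$, the $a$-th power of the cycle, $C_n^a$, has vertices $v_1,\dots,v_n$, with $v_i$ and $v_j$ ($i\ne j$) adjacent iff their cyclic distance $\min(|i-j|,\,n-|i-j|)$ is at most $a$. $D_n^a$ denotes the complement of $C_n^a$. *)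

From Stdlib Require Import Reals.
From mathcomp Require Import all_boot.
Set Implicit Arguments. Unset Strict Implicit. Unset Printing Implicit Defensive.

Record rect := Rect { rx1 : R; rx2 : R; ry1 : R; ry2 : R }.

Definition rect_valid (r : rect) : Prop := Rlt (rx1 r) (rx2 r) /\ Rlt (ry1 r) (ry2 r).

Definition in_interior (r : rect) (p q : R) : Prop :=
  (Rlt (rx1 r) p /\ Rlt p (rx2 r)) /\ (Rlt (ry1 r) q /\ Rlt q (ry2 r)).

Definition non_overlapping (r s : rect) : Prop :=
  ~ (exists p q : R, in_interior r p q /\ in_interior s p q).

Definition hvisible (r s : rect) : Prop :=
  exists c : R, (Rlt (ry1 r) c /\ Rlt c (ry2 r)) /\ (Rlt (ry1 s) c /\ Rlt c (ry2 s)).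

Definition vvisible (r s : rect) : Prop :=
  exists c : R, (Rlt (rx1 r) c /\ Rlt c (rx2 r)) /\ (Rlt (rx1 s) c /\ Rlt c (rx2 s)).

(* A (simple) graph on the finite vertex type V, given by its adjacency
   relation, is a transparent rectangle visibility graph. *)
Definition is_TRVG (V : finType) (adj : V -> V -> Prop) : Prop :=
  exists f : V -> rect,
    (forall v, rect_valid (f v)) /\
    (forall u v, u <> v -> non_overlapping (f u) (f v)) /\
    (forall u v, u <> v -> (adj u v <-> hvisible (f u) (f v) \/ vvisible (f u) (f v))).

Definition cdist (n : nat) (i j : 'I_n) : nat :=
  let d := if (i <= j)%N then (j - i)%N else (i - j)%N in minn d (n - d).

Definition Cpow (n a : nat) (i j : 'I_n) : Prop := i <> j /\ (cdist i j <= a)%N.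

Definition Dpow (n a : nat) (i j : 'I_n) : Prop := i <> j /\ ~ @Cpow n a i j.

(* Parts (i), (ii) and (iv) are explicit representations by boxes with integer
   corners.  For (iii), the vertices v_0, ..., v_3 and v_(a+4), ..., v_(a+7)
   induce a K_{4,4} in D_n^a.  In a representation, the pairs of rectangles seen
   along a vertical line form an interval graph, and so do those seen along a
   horizontal line.  An interval graph in which both sides of a bipartition are
   independent has fewer edges than vertices: the interval starting last meets
   at most one interval, because any two intervals meeting it contain its left
   end and hence meet each other.  So the 16 edges of K_{4,4} cannot be covered
   by two such graphs on 8 vertices. *)

From Stdlib Require Import Reals Lra.
From mathcomp Require Import all_boot zify.

Section RealIntervals.
Local Open Scope R_scope.

Lemma open_intervals_meet (a b c d : R) : a < b -> c < d ->
  (exists x, a < x < b /\ c < x < d) <-> a < d /\ c < b.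
Proof.
move=> ab cd; split=> [[x [[? ?] [? ?]]] | [ad cb]]; first lra.
exists ((Rmax a c + Rmin b d) / 2).
by rewrite /Rmax /Rmin; case: Rle_dec; case: Rle_dec; split; split; lra.
Qed.

Lemma vvisibleE {r s : rect} : rect_valid r -> rect_valid s ->
  vvisible r s <-> rx1 r < rx2 s /\ rx1 s < rx2 r.
Proof. by move=> [? _] [? _]; apply: open_intervals_meet. Qed.

Lemma hvisibleE {r s : rect} : rect_valid r -> rect_valid s ->
  hvisible r s <-> ry1 r < ry2 s /\ ry1 s < ry2 r.
Proof. by move=> [_ ?] [_ ?]; apply: open_intervals_meet. Qed.

Lemma non_overlappingE (r s : rect) :
  non_overlapping r s <-> ~ (vvisible r s /\ hvisible r s).
Proof.
rewrite /non_overlapping /in_interior; split=> no.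
- by move=> [[p hp] [q hq]]; apply: no; exists p, q; tauto.
- by move=> [p [q hpq]]; apply: no; split; [exists p | exists q]; tauto.
Qed.

Lemma INR_ltE (m k : nat) : INR m < INR k <-> (m < k)%N.
Proof. by split=> [/INR_lt /ltP | /ltP /lt_INR]. Qed.

End RealIntervals.

Lemma is_TRVG_induced {V W : finType} {g : W -> V}
    {adjV : V -> V -> Prop} {adjW : W -> W -> Prop} :
  injective g -> (forall x y, x <> y -> adjW x y <-> adjV (g x) (g y)) ->
  is_TRVG adjV -> is_TRVG adjW.
Proof.
move=> ginj adjE [f [valid [disj vis]]]; exists (f \o g).
have g_neq x y : x <> y -> g x <> g y by move=> xy /ginj.
split=> // [x|]; first exact: valid.
by split=> x y xy; [apply: disj | rewrite /= adjE // vis]; move: xy => /g_neq.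
Qed.

Record box := Box { bx1 : nat; bx2 : nat; by1 : nat; by2 : nat }.

Definition xoverlap (b c : box) := bx1 b < bx2 c /\ bx1 c < bx2 b.
Definition yoverlap (b c : box) := by1 b < by2 c /\ by1 c < by2 b.

Definition rect_of_box (b : box) : rect :=
  Rect (INR (bx1 b)) (INR (bx2 b)) (INR (by1 b)) (INR (by2 b)).

Lemma is_TRVG_of_boxes (V : finType) (adj : V -> V -> Prop) (B : V -> box) :
  (forall v, bx1 (B v) < bx2 (B v) /\ by1 (B v) < by2 (B v)) ->
  (forall u v, u <> v -> ~ (xoverlap (B u) (B v) /\ yoverlap (B u) (B v))) ->
  (forall u v, u <> v -> adj u v <-> xoverlap (B u) (B v) \/ yoverlap (B u) (B v)) ->
  is_TRVG adj.
Proof.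
move=> Bvalid Bdisj Badj; exists (rect_of_box \o B).
have valid v : rect_valid (rect_of_box (B v)) by rewrite /rect_valid /= !INR_ltE.
have vvisE u v : vvisible (rect_of_box (B u)) (rect_of_box (B v)) <-> xoverlap (B u) (B v).
  by rewrite vvisibleE // /= !INR_ltE.
have hvisE u v : hvisible (rect_of_box (B u)) (rect_of_box (B v)) <-> yoverlap (B u) (B v).
  by rewrite hvisibleE // /= !INR_ltE.
split=> //; split=> u v uv /=; last by rewrite Badj // vvisE hvisE; tauto.
by rewrite non_overlappingE vvisE hvisE; apply: Bdisj.
Qed.

Definition cyc_dist (n u v : nat) : nat :=
  let d := if u <= v then v - u else u - v in minn d (n - d).

Definition grid_layout (n : nat) (P : nat -> nat -> Prop) (B : nat -> box) : Prop :=
  (forall v, v < n -> bx1 (B v) < bx2 (B v) /\ by1 (B v) < by2 (B v)) /\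
  (forall u v, u < n -> v < n -> u <> v ->
     ~ (xoverlap (B u) (B v) /\ yoverlap (B u) (B v)) /\
     (P u v <-> xoverlap (B u) (B v) \/ yoverlap (B u) (B v))).

Lemma is_TRVG_of_grid_layout n (adj : 'I_n -> 'I_n -> Prop) P B :
  grid_layout n P B -> (forall i j : 'I_n, i <> j -> adj i j <-> P i j) -> is_TRVG adj.
Proof.
move=> [Bvalid Bok] adjP.
have Bok' (i j : 'I_n) (ij : i <> j) :=
  Bok i j (ltn_ord i) (ltn_ord j) (fun e => ij (val_inj e)).
apply: (@is_TRVG_of_boxes _ _ (B \o val)) => [v | i j /Bok' [] | i j ij] //.
- exact: Bvalid (ltn_ord v).
- by rewrite adjP //; case: (Bok' i j ij).
Qed.

Lemma Cpow_iff n a (i j : 'I_n) : i <> j -> Cpow a i j <-> cyc_dist n i j <= a.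
Proof. by rewrite /Cpow; tauto. Qed.

Lemma Dpow_iff n a (i j : 'I_n) : i <> j -> Dpow a i j <-> a < cyc_dist n i j.
Proof.
move=> ij; rewrite /Dpow /Cpow ltnNge.
by split=> [[_ nC] | /negP nC]; [apply/negP => ?; apply: nC | split=> // -[]].
Qed.

Lemma Cpow_is_TRVG_of_layout n a B :
  grid_layout n (fun u v => cyc_dist n u v <= a) B -> is_TRVG (@Cpow n a).
Proof. by move/is_TRVG_of_grid_layout; apply; apply: Cpow_iff. Qed.

Lemma Dpow_is_TRVG_of_layout n a B :
  grid_layout n (fun u v => a < cyc_dist n u v) B -> is_TRVG (@Dpow n a).
Proof. by move/is_TRVG_of_grid_layout; apply; apply: Dpow_iff. Qed.

Ltac solve_layout :=
  rewrite /grid_layout /xoverlap /yoverlap /cyc_dist;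
  split=> [v vn | u v un vn uv]; repeat case: ifP => ?; simpl; lia.

Lemma Cpow_complete_layout n a : n <= 2 * a + 1 ->
  grid_layout n (fun u v => cyc_dist n u v <= a) (fun v => Box (2 * v) (2 * v + 1) 0 1).
Proof. move=> na; solve_layout. Qed.

(* The y-staircase [2v, 2v + 2a + 2] realises the a-th power of the path
   v_0 ... v_(n-1).  The first a vertices keep only the top end of their step;
   their mutual edges and the wrap-around edges to the last a vertices are
   realised in x. *)
Definition Cpow_box n a v : box :=
  if v < a then
    Box (2 * (v + a)) (2 * (v + 2 * a + 1)) (2 * (v + a) + 1) (2 * (v + a + 1))
  else if n - a <= v then
    Box (2 * (v + 2 * a + 1 - n) - 1) (2 * (v + 2 * a + 1 - n)) (2 * v) (2 * (v + a + 1))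
  else Box (8 * n + 2 * v) (8 * n + 2 * v + 1) (2 * v) (2 * (v + a + 1)).

Lemma Cpow_layout n a : 1 <= a -> 2 * a + 1 < n ->
  grid_layout n (fun u v => cyc_dist n u v <= a) (Cpow_box n a).
Proof. move=> a1 an; rewrite /Cpow_box; solve_layout. Qed.

Lemma Cpow_is_TRVG n a : 1 <= a -> is_TRVG (@Cpow n a).
Proof.
move=> a1; case: (leqP n (2 * a + 1)) => na; apply: Cpow_is_TRVG_of_layout.
- exact: Cpow_complete_layout.
- exact: Cpow_layout.
Qed.

(* Even vertices get long x-intervals and odd vertices long y-intervals
   [4, 4v + 8]; a short interval [4v + 16, 4v + 18] meets a long one
   [4, 4w + 8] iff w >= v + 3.  The square of v_(n-1) meets every long
   interval except those of its neighbours v_0 and v_(n-2), which start at 7. *)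
Definition Dpow1_box n v : box :=
  if v == n.-1 then Box 0 6 0 6
  else if ~~ odd v then
    Box (if (v == 0) || (v == n - 2) then 7 else 4) (4 * v + 8) (4 * v + 16) (4 * v + 18)
  else Box (4 * v + 16) (4 * v + 18) (if v == n - 2 then 7 else 4) (4 * v + 8).

Lemma Dpow1_layout n : 3 <= n -> grid_layout n (fun u v => 1 < cyc_dist n u v) (Dpow1_box n).
Proof. move=> n3; rewrite /Dpow1_box; solve_layout. Qed.

Lemma Dpow1_is_TRVG n : 3 <= n -> is_TRVG (@Dpow n 1).
Proof. by move=> n3; apply: Dpow_is_TRVG_of_layout; apply: Dpow1_layout. Qed.

Lemma Dpow_empty_layout n a : n <= 2 * a + 1 ->
  grid_layout n (fun u v => a < cyc_dist n u v)
    (fun v => Box (2 * v) (2 * v + 1) (2 * v) (2 * v + 1)).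
Proof. move=> na; solve_layout. Qed.

(* For n = 2a + 2, D_n^a is the perfect matching v ~ v + a + 1. *)
Definition matching_box a v : box :=
  let x := if v <= a then 2 * v else 2 * (v - a.+1) in Box x x.+1 (2 * v) (2 * v + 1).

Lemma Dpow_matching_layout n a : n = 2 * a + 2 ->
  grid_layout n (fun u v => a < cyc_dist n u v) (matching_box a).
Proof. move=> na; rewrite /matching_box; solve_layout. Qed.

(* For n = 2a + 3, D_n^a is the cycle formed by the edges (v, v + a + 1) and
   (v, v + a + 2) for v <= a, and (a + 1, 2a + 2); the first and last kinds
   are realised in x, the second in y. *)
Definition odd_cycle_box a v : box :=
  if v <= a then Box (4 * v) (4 * v + 2) (4 * v) (4 * v + 2)
  else if v == a.+1 then Box 0 3 (4 * a + 4) (4 * a + 6)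
  else if v == 2 * a + 2 then Box 2 3 (4 * a) (4 * a + 2)
  else Box (4 * (v - a.+1)) (4 * (v - a.+1) + 2) (4 * (v - a.+2)) (4 * (v - a.+2) + 2).

Lemma Dpow_odd_cycle_layout n a : n = 2 * a + 3 ->
  grid_layout n (fun u v => a < cyc_dist n u v) (odd_cycle_box a).
Proof. move=> na; rewrite /odd_cycle_box; solve_layout. Qed.

(* For n = 2m with m = a + 2, D_n^a joins v to v + m - 1, v + m and v + m + 1
   (mod n).  The x-intervals realise the path m, 0, m + 1, 1, ..., 2m - 1, m - 1
   of the edges (v, v + m) and (v, v + m + 1); the y-intervals realise the
   remaining edges (v, v + m - 1), v <= m. *)
Definition ladder_box m v : box :=
  if v == 0 then Box 2 5 (8 * m - 5) (8 * m - 4)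
  else if v < m.-1 then Box (4 * v + 2) (4 * v + 5) (8 * v) (8 * v + 2)
  else if v == m.-1 then Box (4 * v + 2) (4 * v + 5) (8 * m - 8) (8 * m - 4)
  else if v == m then Box 0 3 8 12
  else if v < 2 * m - 1 then
    Box (4 * (v - m)) (4 * (v - m) + 3) (8 * (v - m) + 8) (8 * (v - m) + 10)
  else Box (4 * (v - m)) (4 * (v - m) + 3) 11 12.

Lemma Dpow_ladder_layout n a : 2 <= a -> n = 2 * a + 4 ->
  grid_layout n (fun u v => a < cyc_dist n u v) (ladder_box a.+2).
Proof. move=> a2 na; rewrite /ladder_box; solve_layout. Qed.

Lemma Dpow_is_TRVG n a : 2 <= a -> n <= 2 * a + 4 -> is_TRVG (@Dpow n a).
Proof.
move=> a2 na.
have [n1 | [n2 | [n3 | n4]]] :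
    n <= 2 * a + 1 \/ n = 2 * a + 2 \/ n = 2 * a + 3 \/ n = 2 * a + 4 by lia.
all: apply: Dpow_is_TRVG_of_layout.
- exact: Dpow_empty_layout.
- exact: Dpow_matching_layout.
- exact: Dpow_odd_cycle_layout.
- exact: Dpow_ladder_layout.
Qed.

Section BipartiteIntervalGraph.
Local Open Scope R_scope.

Lemma seq_max_exists {T : eqType} (f : T -> R) (x : T) (s : seq T) :
  exists2 m, m \in x :: s & forall t, t \in x :: s -> f t <= f m.
Proof.
elim: s x => [|y s IH] x.
  by exists x => [|t]; rewrite ?inE // => /eqP ->; apply: Rle_refl.
have [m ms mmax] := IH y.
case: (Rle_dec (f x) (f m)) => xm.
- by exists m => [|t]; rewrite inE ?ms ?orbT // => /orP [/eqP -> | /mmax].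
- exists x => [|t]; rewrite inE ?eqxx // => /orP [/eqP -> | /mmax]; [apply: Rle_refl | lra].
Qed.

Lemma set_max_exists {T : finType} (f : T -> R) {A : {set T}} :
  A != set0 -> exists2 m, m \in A & forall t, t \in A -> f t <= f m.
Proof.
case/set0Pn => x xA; have [m] := seq_max_exists f x (enum A).
have memA t : (t \in x :: enum A) = (t \in A) by rewrite inE mem_enum orb_idl // => /eqP ->.
by rewrite memA => mA mmax; exists m => // t; rewrite -memA; apply: mmax.
Qed.

Context {T : finType} (l r : T -> R) (side : T -> bool).

Definition meets (s t : T) : bool := Rlt_dec (l s) (r t) && Rlt_dec (l t) (r s).

Lemma meetsP s t : reflect (l s < r t /\ l t < r s) (meets s t).
Proof. by apply: (iffP andP) => -[/sumboolP ? /sumboolP ?]; split=> //; apply/sumboolP. Qed.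

Lemma meetsC s t : meets s t = meets t s.
Proof. by rewrite /meets andbC. Qed.

Hypothesis meets_across : forall s t, s != t -> meets s t -> side s != side t.

Definition cross_meets (A : {set T}) :=
  [set p in setX A A | [&& ~~ side p.1, side p.2 & meets p.1 p.2]].

Definition cross_meets_at (A : {set T}) m :=
  [set p in cross_meets A | (p.1 == m) || (p.2 == m)].

Lemma cross_meets_set1 m : cross_meets [set m] = set0.
Proof.
apply/setP => -[s t]; rewrite !inE /=.
by apply/negbTE/and4P => -[/andP [/eqP -> /eqP ->]]; case: (side m).
Qed.

Lemma meets_max_unique {m s t} : l s <= l m -> l t <= l m ->
  meets s m -> meets t m -> side s = side t -> s = t.
Proof.
move=> sm tm /meetsP [? ?] /meetsP [? ?] st.
have mst : meets s t by apply/meetsP; split; lra.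
by apply/eqP; apply: contraLR mst => /meets_across nst; apply/negP => /nst; rewrite st eqxx.
Qed.

Lemma card_cross_meets_at_max {A : {set T}} {m} :
  (forall t, t \in A -> l t <= l m) -> (#|cross_meets_at A m| <= 1)%N.
Proof.
move=> mmax; apply/card_le1_eqP => -[s t] [s' t']; rewrite !inE /=.
move=> /andP [/and4P [/andP [sA tA] ns st mst] /orP at_m].
move=> /andP [/and4P [/andP [s'A t'A] ns' st' ms't'] /orP at_m'].
case: at_m => /eqP ?; case: at_m' => /eqP ?; subst.
- rewrite meetsC in mst; rewrite meetsC in ms't'.
  by rewrite (meets_max_unique (mmax _ t'A) (mmax _ tA) ms't' mst) // st st'.
- by rewrite st' in ns.
- by rewrite st in ns'.
- by rewrite (meets_max_unique (mmax _ s'A) (mmax _ sA) ms't' mst) // (negPf ns) (negPf ns').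
Qed.

Lemma card_cross_meets_lt (A : {set T}) : A != set0 -> (#|cross_meets A| < #|A|)%N.
Proof.
have [k] := ubnP #|A|; elim: k A => // k IH A Ak A0.
have [m mA mmax] := set_max_exists l A0.
have [Am0 | Am] := eqVneq (A :\ m) set0.
  by rewrite -(setD1K mA) Am0 setU0 cross_meets_set1 cards0 cards1.
rewrite (cardsD1 m A) mA in Ak *.
have IHm : (#|cross_meets (A :\ m)| < #|A :\ m|)%N by apply: IH.
have split_m : cross_meets A \subset cross_meets (A :\ m) :|: cross_meets_at A m.
  apply/subsetP => -[s t]; rewrite !inE /=.
  move=> /and4P [/andP [-> ->] -> -> ->]; rewrite !andbT.
  by case: (s == m); case: (t == m).
have := leq_trans (subset_leq_card split_m) (leq_card_setU _ _).
have := card_cross_meets_at_max mmax; lia.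
Qed.

End BipartiteIntervalGraph.

Lemma complete_bipartite_not_TRVG p q : 2 * (p + q - 1) < p * q ->
  ~ is_TRVG (fun s t : 'I_p + 'I_q => is_inl s != is_inl t).
Proof.
move=> pq [f [valid [_ visE]]].
pose lx t := rx1 (f t); pose rx t := rx2 (f t); pose ly t := ry1 (f t); pose ry t := ry2 (f t).
have meetsE s t : s <> t -> meets lx rx s t || meets ly ry s t <-> is_inl s != is_inl t.
  move=> st; rewrite (visE _ _ st) (vvisibleE (valid s) (valid t)) (hvisibleE (valid s) (valid t)).
  split=> [/orP [/meetsP ? | /meetsP ?] | [/(meetsP ly ry) -> | /(meetsP lx rx) ->]];
    rewrite ?orbT //; [right | left]; exact.
have across_x s t : s != t -> meets lx rx s t -> is_inl s != is_inl t.
  by move=> /eqP st mst; apply/meetsE => //; rewrite mst.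
have across_y s t : s != t -> meets ly ry s t -> is_inl s != is_inl t.
  by move=> /eqP st mst; apply/meetsE => //; rewrite mst orbT.
have T0 : [set: 'I_p + 'I_q] != set0.
  have p0 : 0 < p by rewrite lt0n; apply: contraTneq pq => ->; rewrite mul0n.
  by apply/set0Pn; exists (inl (Ordinal p0)).
pose X := cross_meets lx rx is_inl setT; pose Y := cross_meets ly ry is_inl setT.
have XY i j : (inr i, inl j) \in X :|: Y.
  have /orP [xm | ym] : meets lx rx (inr i) (inl j) || meets ly ry (inr i) (inl j).
    exact/meetsE.
  - by rewrite !inE /= xm.
  - by rewrite !inE /= ym orbT.
have Q_sub : setX [set inr i | i : 'I_q] [set inl j | j : 'I_p] \subset X :|: Y.
  by apply/subsetP => -[s t] /setXP [/imsetP [i _ ->] /imsetP [j _ ->]].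
have card_T : #|[set: 'I_p + 'I_q]| = p + q by rewrite cardsT card_sum !card_ord.
have cX : #|X| < p + q by rewrite -card_T; apply: (@card_cross_meets_lt _ lx rx is_inl across_x).
have cY : #|Y| < p + q by rewrite -card_T; apply: (@card_cross_meets_lt _ ly ry is_inl across_y).
have := subset_leq_card Q_sub.
rewrite cardsX (card_imset _ inr_inj) (card_imset _ inl_inj) !card_ord cardsU; lia.
Qed.

Lemma Dpow_not_TRVG n a : 3 <= a -> 2 * a + 8 <= n -> ~ is_TRVG (@Dpow n a).
Proof.
move=> a3 an; apply: contra_not (complete_bipartite_not_TRVG 4 4 isT).
pose gn (t : 'I_4 + 'I_4) := match t with inl i => val i | inr j => a + 4 + j end.
have gn_lt t : gn t < n by case: t => -[j ?] /=; lia.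
pose g t : 'I_n := Ordinal (gn_lt t).
have g_inj : injective g.
  by move=> [[i ?]|[i ?]] [[j ?]|[j ?]] [] /= ij; try lia; f_equal; apply: val_inj => /=; lia.
apply: (is_TRVG_induced g_inj) => s t st; rewrite Dpow_iff; last by move/g_inj.
by move: s t st => [[i ?]|[i ?]] [[j ?]|[j ?]] st; rewrite /cyc_dist /=; case: ifP => ?; lia.
Qed.

Theorem theorem6 (n a : nat) (hn : (3 <= n)%N) (ha : (1 <= a)%N) :
  is_TRVG (@Cpow n a) /\
  is_TRVG (@Dpow n 1) /\
  ((3 <= a)%N -> (2 * a + 8 <= n)%N -> ~ is_TRVG (@Dpow n a)) /\
  ((2 <= a)%N -> (n <= 2 * a + 4)%N -> is_TRVG (@Dpow n a)).
Proof.
split; first exact: Cpow_is_TRVG.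
split; first exact: Dpow1_is_TRVG.
split; first exact: Dpow_not_TRVG.
exact: Dpow_is_TRVG.
Qed.
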